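(* Let $G$ be a graph and $X,Y\subseteq V(G)$ disjoint such that $(X,Y)$ is induced $M_2$-free. Then for every integer $r\ge1$ there is an equipartition $X=X_1\cup\dots\cup X_r$ and a partition $Y=Y_1\cup\dots\cup Y_{r+1}$ (parts possibly empty) such that $(X_i,Y_j)$ is homogeneous for every $1\le i\le r$ and $1\le j\le r+1$ with $i\ne j$.
   Context: For disjoint $X,Y\subseteq V(G)$, an induced copy of $M_2$ in $(X,Y)$ is an unordered quadruple $x,x',y,y'$ with $x,x'\in X$, $y,y'\in Y$, $(x,y),(x',y')\in E(G)$ and $(x,y'),(x',y)\notin E(G)$; $(X,Y)$ is induced $M_2$-free if it contains no such copy. A pair $(A,B)$ of disjoint vertex sets is homogeneous if the bipartite graph of $G$ between $A$ and $B$ is complete or empty. A partition $\{P_1,\dots,P_r\}$ is an equipartition if $||P_i|-|P_j||\le1$ for all $i,j$. *)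

From mathcomp Require Import all_boot.
Set Implicit Arguments. Unset Strict Implicit. Unset Printing Implicit Defensive.

Definition simple_graph (T : finType) (e : rel T) : Prop :=
  symmetric e /\ irreflexive e.

Definition induced_M2_free (T : finType) (e : rel T) (X Y : {set T}) : Prop :=
  ~ exists x x' y y',
      [/\ x \in X, x' \in X, y \in Y & y' \in Y] /\
      [/\ e x y, e x' y', ~~ e x y' & ~~ e x' y].

Definition homogeneous (T : finType) (e : rel T) (A B : {set T}) : Prop :=
  (forall a b, a \in A -> b \in B -> e a b) \/
  (forall a b, a \in A -> b \in B -> ~~ e a b).

Definition is_partition_of (T : finType) (n : nat) (P : 'I_n -> {set T})
    (S : {set T}) : Prop :=
  (forall i j, i != j -> [disjoint P i & P j]) /\
  \bigcup_(i < n) P i = S.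

Definition is_equipartition_of (T : finType) (n : nat) (P : 'I_n -> {set T})
    (S : {set T}) : Prop :=
  is_partition_of P S /\ (forall i j, #|P i| <= (#|P j|).+1).

From mathcomp Require Import all_boot zify.
Set Implicit Arguments. Unset Strict Implicit. Unset Printing Implicit Defensive.

(* Since (X, Y) is induced M_2-free, the neighbourhoods in Y of the vertices
   of X form a chain under inclusion. Listing X by decreasing neighbourhood,
   the neighbours in X of each y in Y form an initial segment of length p y.
   Cut the list into r consecutive blocks of balanced sizes at positions
   c_0 = 0 <= c_1 <= ... <= c_r = |X|, and send y to the last index j with
   c_j <= p y.  Then y is adjacent to all of every block before j and to none
   of every block after j. *)

Lemma count_iota_interval a b m : b <= m ->
  count (fun k => a <= k < b) (iota 0 m) = b - a.
Proof.
elim: m b => [|m IHm] b le_bm.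
  by move: le_bm; rewrite leqn0 => /eqP ->; rewrite sub0n.
rewrite -addn1 iotaD count_cat /= add0n addn0.
have [lt_bm | ge_bm] := ltnP m b; last by rewrite andbF addn0 IHm.
have -> : b = m.+1 by apply/eqP; rewrite eqn_leq le_bm lt_bm.
rewrite (@eq_in_count _ _ (fun k => a <= k < m)); last first.
  by move=> k; rewrite mem_iota add0n => /andP[_ lt_km]; rewrite lt_km ltnS (ltnW lt_km).
by rewrite IHm // andbT; case: leqP => /=; lia.
Qed.

Lemma count_index (U : eqType) (s : seq U) (a : pred nat) : uniq s ->
  count (fun x => a (index x s)) s = count a (iota 0 (size s)).
Proof.
case: s => [//|x0 s]; move: (x0 :: s) => {}s uniq_s.
rewrite -[s in count _ s](mkseq_nth x0 s) /mkseq count_map.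
apply: eq_in_count => k; rewrite mem_iota add0n => /andP[_ lt_ks].
by rewrite /preim /= index_uniq.
Qed.

Lemma card_index_level_set (T : finType) (X : {set T}) (s : seq T) (a : pred nat) :
  uniq s -> s =i X -> #|[set x in X | a (index x s)]| = count a (iota 0 (size s)).
Proof.
move=> uniq_s sX; rewrite -count_index // -size_filter.
rewrite -(card_uniqP (filter_uniq _ uniq_s)).
by apply: eq_card => x; rewrite inE mem_filter -sX andbC.
Qed.

Lemma mem_prefix_find (U : eqType) (a : pred U) (s : seq U) x :
  sorted (fun x z => a z ==> a x) s -> x \in s ->
  a x = (index x s < find (predC a) s).
Proof.
move=> sorted_s xs; set k := find (predC a) s.
have [lt_xk | le_kx] := ltnP (index x s) k.
  by have := before_find x lt_xk; rewrite nth_index //= => /negbFE.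
apply/negbTE/negP => ax.
have x_lt : index x s < size s by rewrite index_mem.
have has_s : has (predC a) s by rewrite has_find (leq_ltn_trans le_kx).
have k_lt : k < size s by rewrite /k -has_find.
have R_trans : transitive (fun x z => a z ==> a x).
  by move=> y x' z /implyP h1 /implyP h2; apply/implyP => /h2/h1.
have R_refl : reflexive (fun x z => a z ==> a x) by move=> ?; exact: implybb.
have := sorted_leq_nth R_trans R_refl x sorted_s _ _ k_lt x_lt le_kx.
by rewrite nth_index // ax (negbTE (nth_find x has_s)).
Qed.

Lemma level_sets_partition (T : finType) (m : nat) (f : T -> nat) (S : {set T}) :
  {in S, forall x, f x < m} ->
  is_partition_of (fun i : 'I_m => [set x in S | f x == i]) S.
Proof.
move=> f_lt; split=> [i j neq_ij | ].
  rewrite -setI_eq0; apply/eqP/setP => x; rewrite !inE.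
  apply/negbTE; apply: contra neq_ij => /andP[/andP[_ /eqP fx_i] /andP[_ /eqP fx_j]].
  by rewrite -val_eqE /= -fx_i -fx_j.
apply/setP => x; apply/bigcupP/idP => [[i _] | Sx]; first by rewrite inE => /andP[].
by exists (Ordinal (f_lt x Sx)); rewrite // inE Sx /=.
Qed.

Lemma homogeneous_level_sets (T : finType) (e : rel T) (A B : {set T})
    (f g : T -> nat) (h : nat -> nat) (i j : nat) :
  {in A & B, forall a b, e a b = (f a < g b)} -> {homo h : k l / k <= l} -> i != j ->
  homogeneous e [set a in A | h (f a) == i] [set b in B | h (g b) == j].
Proof.
move=> adj h_homo neq_ij.
have [lt_ij | lt_ji | eq_ij] := ltngtP i j; last by rewrite eq_ij eqxx in neq_ij.
- left=> a b; rewrite !inE => /andP[Aa /eqP hfa] /andP[Bb /eqP hgb].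
  by rewrite adj // ltnNge; apply: contraL lt_ij => /h_homo; rewrite hfa hgb -ltnNge.
- right=> a b; rewrite !inE => /andP[Aa /eqP hfa] /andP[Bb /eqP hgb].
  by rewrite adj //; apply: contraL lt_ji => /ltnW/h_homo; rewrite hfa hgb -ltnNge.
Qed.

Section NeighbourhoodChain.
Variables (T : finType) (e : rel T) (X Y : {set T}).

Definition nbhd x := [set y in Y | e x y].

Lemma M2_free_nbhd_total : induced_M2_free e X Y ->
  {in X &, total (fun x z => nbhd z \subset nbhd x)}.
Proof.
move=> M2_free x z Xx Xz; rewrite orbC.
case: (boolP (nbhd x \subset nbhd z)) => //= /subsetPn [y Nx_y Nz_y].
apply/subsetP => y' Nz_y'; apply/negPn/negP => Nx_y'; apply: M2_free.
move: Nx_y Nz_y Nz_y' Nx_y'; rewrite !inE => /andP[Yy exy].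
rewrite Yy /= => nezy /andP[Yy' ezy']; rewrite Yy' /= => nexy'.
by exists x, z, y, y'.
Qed.

Lemma M2_free_threshold_order : induced_M2_free e X Y ->
  exists s (p : T -> nat),
    [/\ uniq s, s =i X & {in X & Y, forall x y, e x y = (index x s < p y)}].
Proof.
move=> /M2_free_nbhd_total nbhd_total.
set leN := fun x z => nbhd z \subset nbhd x.
pose s := sort leN (enum X).
have sorted_s : sorted leN s.
  apply: (@sort_sorted_in _ [pred x in X]) nbhd_total _ _.
  by apply/allP => x; rewrite mem_enum.
exists s, (fun y => find (predC (e^~ y)) s); split.
- by rewrite sort_uniq enum_uniq.
- by move=> x; rewrite mem_sort mem_enum.
move=> x y Xx Yy; apply: mem_prefix_find; last by rewrite mem_sort mem_enum.
apply: sub_sorted sorted_s => x1 x2 /subsetP sub12; apply/implyP => e2y.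
by have := sub12 y; rewrite !inE Yy e2y => /(_ isT).
Qed.

End NeighbourhoodChain.

Section BalancedCuts.
Variables (r n : nat).
Hypothesis r_gt0 : 0 < r.

Definition cut i := i * n %/ r.

Lemma cut0 : cut 0 = 0.
Proof. by rewrite /cut mul0n div0n. Qed.

Lemma cut_full : cut r = n.
Proof. by rewrite /cut mulKn. Qed.

Lemma leq_cut i j : i <= j -> cut i <= cut j.
Proof. by move=> le_ij; rewrite leq_div2r // leq_mul2r le_ij orbT. Qed.

Lemma cut_gap i : cut i.+1 - cut i = n %/ r + (r <= i * n %% r + n %% r).
Proof. by rewrite /cut mulSn addnC divnD // -addnA addKn. Qed.

Lemma cut_gap_balanced i j : cut i.+1 - cut i <= (cut j.+1 - cut j).+1.
Proof. by rewrite !cut_gap; case: leqP; case: leqP; lia. Qed.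

Definition part_of k : 'I_r.+1 := [arg max_(j > ord0 | cut j <= k) j].

Lemma part_ofP k :
  cut (part_of k) <= k /\ forall j, j <= r -> cut j <= k -> j <= part_of k.
Proof.
rewrite /part_of; case: arg_maxnP => [|i cut_i max_i]; first by rewrite cut0.
by split=> // j le_jr; exact: (max_i (Ordinal (le_jr : j < r.+1))).
Qed.

Lemma leq_part_of k l : k <= l -> part_of k <= part_of l.
Proof.
have [cut_k _] := part_ofP k; have [_ max_l] := part_ofP l.
by move=> le_kl; apply: max_l; [rewrite -ltnS | exact: leq_trans le_kl].
Qed.

Lemma part_ofE k i : i < r -> (part_of k == i :> nat) = (cut i <= k < cut i.+1).
Proof.
move=> lt_ir; have [cut_k max_k] := part_ofP k.
apply/eqP/andP => [def_i | [le_cut_k lt_k_cut]].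
  rewrite -def_i cut_k ltnNge; split=> //; apply/negP => /max_k.
  by rewrite ltnn def_i => /(_ lt_ir).
apply/eqP; rewrite eqn_leq max_k ?(ltnW lt_ir) // andbT leqNgt.
by apply/negP => /leq_cut/leq_trans/(_ cut_k); rewrite leqNgt lt_k_cut.
Qed.

Lemma part_of_lt k : k < n -> part_of k < r.
Proof.
move=> lt_kn; have [cut_k _] := part_ofP k; rewrite ltn_neqAle -ltnS ltn_ord andbT.
by apply: contraTneq cut_k => ->; rewrite cut_full -ltnNge.
Qed.

Lemma count_part_of i : i < r ->
  count (fun k => part_of k == i :> nat) (iota 0 n) = cut i.+1 - cut i.
Proof.
move=> lt_ir; rewrite (eq_count (fun k => part_ofE k lt_ir)) count_iota_interval //.
by rewrite -[leqRHS]cut_full leq_cut.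
Qed.
End BalancedCuts.

Theorem lemma2p2 (T : finType) (e : rel T) (X Y : {set T}) (r : nat) :
  simple_graph e ->
  [disjoint X & Y] ->
  induced_M2_free e X Y ->
  1 <= r ->
  exists (P : 'I_r -> {set T}) (Q : 'I_r.+1 -> {set T}),
    [/\ is_equipartition_of P X,
        is_partition_of Q Y &
        forall (i : 'I_r) (j : 'I_r.+1),
          (nat_of_ord i != nat_of_ord j) -> homogeneous e (P i) (Q j)].
Proof.
move=> _ _ /M2_free_threshold_order [s [p [uniq_s sX adj]]] r_gt0.
pose part k := nat_of_ord (part_of r (size s) k).
exists (fun i : 'I_r => [set x in X | part (index x s) == i]),
       (fun j : 'I_r.+1 => [set y in Y | part (p y) == j]).
split; [split | |].
- by apply: level_sets_partition => x Xx; rewrite part_of_lt // index_mem sX.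
- move=> i j; rewrite (card_index_level_set (fun k => part k == i)) //.
  rewrite (card_index_level_set (fun k => part k == j)) // !count_part_of //.
  exact: cut_gap_balanced.
- by apply: level_sets_partition => y _; rewrite ltn_ord.
- move=> i j; apply: homogeneous_level_sets adj _ => k l; exact: leq_part_of.
Qed.
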